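(* Let $n\geq 3$, $d\geq 2$, $\ell\in\mathbb{R}_{>0}^n$, and let $P=(\mathbf{v}_1,\ldots,\mathbf{v}_{n-1})\in V_d(\ell)$ with $2\leq\dim(P)<n-1$. Set $\mathbf{v}_0=\mathbf{v}_n=\mathbf{0}$. For each $i=1,\ldots,n-1$, let $L_i$ denote the line through $\mathbf{v}_{i-1}$ and $\mathbf{v}_{i+1}$, and let $U_i$ denote the linear span of $\{\mathbf{v}_j\}_{j\neq i,\,1\leq j\leq n-1}$. Then there exists $i\in\{1,\ldots,n-1\}$ such that $\mathbf{v}_i\in U_i\setminus L_i$.
   Context: $V_d(\ell)=\{(\mathbf{v}_1,\ldots,\mathbf{v}_{n-1})\in(\mathbb{R}^d)^{n-1} : \|\mathbf{v}_i-\mathbf{v}_{i-1}\|=l_i,\ i=1,\ldots,n\}$ with $\mathbf{v}_0=\mathbf{v}_n=\mathbf{0}$. $\dim(P)$ is the dimension of the linear span of $\{\mathbf{v}_1,\ldots,\mathbf{v}_{n-1}\}$. *)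

From mathcomp Require Import all_boot all_order all_algebra.
From mathcomp Require Import reals.
Set Implicit Arguments. Unset Strict Implicit. Unset Printing Implicit Defensive.
Import Order.TTheory GRing.Theory Num.Theory.
Local Open Scope ring_scope.

Definition eucnorm (R : realType) (d : nat) (x : 'rV[R]_d) : R :=
  Num.sqrt (\sum_(j < d) x 0 j ^+ 2).

(* A polygon is given by v : nat -> 'rV_d; only v 0, ..., v n matter.
   P = (v 1, ..., v (n-1)) lies in V_d(l) iff v 0 = v n = 0 and
   ||v i - v (i-1)|| = l i for i = 1..n. *)
Definition in_Vd (R : realType) (d n : nat) (l : nat -> R)
  (v : nat -> 'rV[R]_d) : Prop :=
  v 0%N = 0 /\ v n = 0 /\
  forall i : nat, (1 <= i <= n)%N -> eucnorm (v i - v i.-1) = l i.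

Definition polymx (R : realType) (d n : nat) (v : nat -> 'rV[R]_d)
  : 'M[R]_(n.-1, d) := \matrix_(j < n.-1) v j.+1.

Definition dimP (R : realType) (d n : nat) (v : nat -> 'rV[R]_d) : nat :=
  \rank (polymx n v).

(* U_i = linear span of { v_j : j <> i, 1 <= j <= n-1 } (row space) *)
Definition Umx (R : realType) (d n : nat) (v : nat -> 'rV[R]_d) (i : nat)
  : 'M[R]_(n.-1, d) := \matrix_(j < n.-1) (if j.+1 == i then 0 else v j.+1).

Definition on_line (R : realType) (d : nat) (a b x : 'rV[R]_d) : Prop :=
  exists t : R, x = a + t *: (b - a).

From mathcomp Require Import all_boot all_order all_algebra.
From mathcomp Require Import reals.
From mathcomp Require Import ring zify.
From Stdlib Require Import Classical.
Set Implicit Arguments. Unset Strict Implicit. Unset Printing Implicit Defensive.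
Import Order.TTheory GRing.Theory Num.Theory.
Local Open Scope ring_scope.

(* If the theorem failed, every vertex v_i lying in U_i would lie on L_i.
   Since dim P < n - 1 the rows v_1, ..., v_{n-1} are dependent, so some v_i
   does lie in U_i.  Because consecutive vertices are distinct, an affine
   relation v_i = v_{i-1} + t (v_{i+1} - v_{i-1}) has t <> 0, 1, so v_{i+1}
   (resp. v_{i-1}) is an affine combination of the other two; this carries
   membership v_i in U_i to the neighbouring indices, hence to all i.  Then all
   vertices lie on their lines L_i, and starting from v_0 = 0 the same affine
   relations put the whole polygon on the line spanned by v_1: dim P <= 1. *)

Lemma affine_submx (F : fieldType) (m n p : nat) (a b : 'M[F]_(m, n))
    (U : 'M[F]_(p, n)) (t : F) :
  t != 0 -> (a <= U)%MS -> ((a + t *: (b - a))%R <= U)%MS -> (b <= U)%MS.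
Proof.
move=> t_neq0 aU xU.
have -> : b = t^-1 *: (a + t *: (b - a)) + (t^-1 * (t - 1)) *: a.
  by apply/matrixP => i j; rewrite !mxE; field.
by rewrite addmx_sub // scalemx_sub.
Qed.

Section Lines.
Variables (R : realType) (d : nat).
Implicit Types a b x : 'rV[R]_d.

Lemma on_line_sym a b x : on_line a b x -> on_line b a x.
Proof.
by move=> [t ->]; exists (1 - t); apply/rowP => j; rewrite !mxE; ring.
Qed.

Lemma on_line_submx (p : nat) a b x (U : 'M[R]_(p, d)) :
  on_line a b x -> x != a -> (a <= U)%MS -> (x <= U)%MS -> (b <= U)%MS.
Proof.
move=> [t ->]; have [-> | t_neq0] := eqVneq t 0.
  by rewrite scale0r addr0 eqxx.
by move=> _; apply: affine_submx.
Qed.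

End Lines.

Lemma eucnorm0 (R : realType) (d : nat) : eucnorm (0 : 'rV[R]_d) = 0.
Proof. by rewrite /eucnorm big1 ?sqrtr0 // => j _; rewrite mxE expr0n. Qed.

Section Polygon.
Variables (R : realType) (n d : nat) (l : nat -> R) (v : nat -> 'rV[R]_d).
Hypotheses (v0 : v 0%N = 0) (vn : v n = 0).
Hypothesis l_gt0 : forall i : nat, (1 <= i <= n)%N -> 0 < l i.
Hypothesis edge_length :
  forall i : nat, (1 <= i <= n)%N -> eucnorm (v i - v i.-1) = l i.

Lemma vertex_neq_prev (k : nat) : (1 <= k <= n)%N -> v k != v k.-1.
Proof.
move=> hk; apply/eqP => e; have := l_gt0 hk.
by rewrite -edge_length // e subrr eucnorm0 ltxx.
Qed.

Lemma vertex_sub_Umx (i j : nat) :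
  j != i -> (j <= n)%N -> (v j <= Umx n v i)%MS.
Proof.
move=> ji jn; have [-> | j_gt0] := posnP j; first by rewrite v0 sub0mx.
have [j_ltn | j_gen] := ltnP j n; last first.
  have -> : j = n by apply/eqP; rewrite eqn_leq jn.
  by rewrite vn sub0mx.
have hj : (j.-1 < n.-1)%N by lia.
have := row_sub (Ordinal hj) (Umx n v i).
by rewrite rowK /= prednK // (negbTE ji).
Qed.

Lemma row'_polymx_sub_Umx (i : 'I_n.-1) :
  (row' i (polymx n v) <= Umx n v i.+1)%MS.
Proof.
apply/row_subP => j; rewrite row'Esub row_rowsub rowK.
apply: vertex_sub_Umx; first by rewrite eqSS eq_sym neq_lift.
by have := ltn_ord (lift i j); lia.
Qed.

Lemma exists_vertex_sub_Umx : (dimP n v < n.-1)%N ->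
  exists2 i : nat, (1 <= i <= n.-1)%N & (v i <= Umx n v i)%MS.
Proof.
move=> dim_lt.
have /row_freePn [i hi] : ~~ row_free (polymx n v).
  by rewrite /row_free -/(dimP n v) ltn_eqF.
exists i.+1; first exact: ltn_ord.
have -> : v i.+1 = row i (polymx n v) by rewrite rowK.
exact: submx_trans hi (row'_polymx_sub_Umx i).
Qed.

Lemma vertices_sub_first :
  (forall i : nat, (1 <= i <= n.-1)%N -> on_line (v i.-1) (v i.+1) (v i)) ->
  forall j : nat, (j <= n)%N -> (v j <= v 1%N)%MS.
Proof.
move=> on_lines.
suff pair_sub j : (j < n)%N -> (v j <= v 1%N)%MS /\ (v j.+1 <= v 1%N)%MS.
  move=> j; rewrite leq_eqVlt => /orP [/eqP -> | /pair_sub []//].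
  by rewrite vn sub0mx.
elim: j => [|j IH] hj; first by rewrite v0 sub0mx submx_refl.
have [vj_sub vj1_sub] := IH (ltnW hj); split=> //.
have on_line_j1 : on_line (v j) (v j.+2) (v j.+1) by apply: (on_lines j.+1); lia.
by apply: (on_line_submx on_line_j1) => //; apply: vertex_neq_prev; lia.
Qed.

Lemma dimP_le1 :
  (forall j : nat, (j <= n)%N -> (v j <= v 1%N)%MS) -> (dimP n v <= 1)%N.
Proof.
move=> vertices_sub; apply: leq_trans (mxrankS _) (rank_leq_row (v 1%N)).
apply/row_subP => j; rewrite rowK; apply: vertices_sub.
by have := ltn_ord j; lia.
Qed.

Section NoVertexOffLine.
Hypothesis sub_Umx_on_line : forall i : nat, (1 <= i <= n.-1)%N ->
  (v i <= Umx n v i)%MS -> on_line (v i.-1) (v i.+1) (v i).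

Lemma sub_Umx_succ (i : nat) : (1 <= i)%N -> (i < n.-1)%N ->
  (v i <= Umx n v i)%MS = (v i.+1 <= Umx n v i.+1)%MS.
Proof.
move=> i_ge1 i_lt; apply/idP/idP => hU.
- apply: (on_line_submx (sub_Umx_on_line _ hU)); first lia.
  + by apply: vertex_neq_prev; lia.
  + by apply: vertex_sub_Umx; lia.
  + by apply: vertex_sub_Umx; lia.
- apply: (on_line_submx (on_line_sym (sub_Umx_on_line _ hU))); first lia.
  + by rewrite eq_sym; apply: (vertex_neq_prev (k := i.+2)); lia.
  + by apply: vertex_sub_Umx; lia.
  + by apply: vertex_sub_Umx; lia.
Qed.

Lemma all_sub_Umx :
  (exists2 i0 : nat, (1 <= i0 <= n.-1)%N & (v i0 <= Umx n v i0)%MS) ->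
  forall i : nat, (1 <= i <= n.-1)%N -> (v i <= Umx n v i)%MS.
Proof.
move=> [i0 hi0 sub_i0].
have sub_eq_first i : (1 <= i <= n.-1)%N ->
    (v i <= Umx n v i)%MS = (v 1%N <= Umx n v 1%N)%MS.
  elim: i => [//|[//|i] IH] hi.
  by rewrite -sub_Umx_succ ?IH //; lia.
by move=> i hi; rewrite sub_eq_first // -(sub_eq_first i0 hi0).
Qed.

End NoVertexOffLine.

End Polygon.

Theorem lemma3p2 (R : realType) (n d : nat) (l : nat -> R)
  (v : nat -> 'rV[R]_d) :
  (3 <= n)%N -> (2 <= d)%N ->
  (forall i : nat, (1 <= i <= n)%N -> 0 < l i) ->
  in_Vd n l v ->
  (2 <= dimP n v)%N -> (dimP n v < n.-1)%N ->
  exists2 i : nat, (1 <= i <= n.-1)%N &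
    (v i <= Umx n v i)%MS /\ ~ on_line (v i.-1) (v i.+1) (v i).
Proof.
move=> _ _ l_gt0 [v0 [vn edge_length]] dim_ge2 dim_lt.
apply: NNPP => no_vertex_off_line.
have sub_Umx_on_line i : (1 <= i <= n.-1)%N ->
    (v i <= Umx n v i)%MS -> on_line (v i.-1) (v i.+1) (v i).
  by move=> hi hU; apply: NNPP => off_line; apply: no_vertex_off_line; exists i.
have all_sub := all_sub_Umx v0 vn l_gt0 edge_length sub_Umx_on_line
  (exists_vertex_sub_Umx v0 vn dim_lt).
have on_lines i (hi : (1 <= i <= n.-1)%N) := sub_Umx_on_line i hi (all_sub i hi).
have := dimP_le1 (vertices_sub_first v0 vn l_gt0 edge_length on_lines).
by move/(leq_trans dim_ge2).
Qed.
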